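(* For every skew-symmetrizable seed datum $(P,Q)$ there exist skew-symmetrizable seed data $(P',Q')$ and $(P'',Q'')$ and integral linear morphisms $$(P,Q)\xrightarrow{\;A\;}(P',Q')\xleftarrow{\;B\;}(P'',Q'')$$ such that $A$ is injective, $B$ is surjective, and $(P'',Q'')$ is saturated-injective.
   Context: Seed data. A skew-symmetrizable seed datum $(P,Q)$ of rank $r$ consists of: mutually dual finite-rank lattices $M,N$ (pairing $m\cdot n$); homomorphisms $P:\mathbb Z^r\to M$, $Q:\mathbb Z^r\to N$ with $Qe_i\neq0$ for each standard basis vector $e_i$; a lattice $N^\bullet$ such that $N,N^\bullet$ are finite-index sublattices of a common lattice, with dual lattice $M^\bullet$; a diagonal matrix $D=\operatorname{diag}(d_1,\dots,d_r)$, $d_i\in\mathbb Q_{>0}$; and a homomorphism $Q^\bullet:\mathbb Z^r\to N^\bullet$ with $Q=Q^\bullet\circ D$ (maps extended $\mathbb Q$-linearly), such that $B^\bullet_{ij}=(Pe_j)\cdot(Q^\bullet e_i)$ is skew-symmetric. Linear morphisms. For seed data $(P,Q)$ (lattices $M,N$) and $(P',Q')$ (lattices $M',N'$) of the same rank $r$ and same $D$, an integral linear morphism is a homomorphism $A:M\to M'$ with $AP=P'$ and $A^\top Q'=Q$, where $A^\top:N'\to N$ is the adjoint. A homomorphism of lattices is saturated if its image is a saturated sublattice (the quotient by it is torsion-free). $(P,Q)$ is saturated-injective if $P$ and $Q$ are both saturated injections. *)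

From HB Require Import structures.
From mathcomp Require Import all_boot all_order all_algebra.
Set Implicit Arguments. Unset Strict Implicit. Unset Printing Implicit Defensive.
Import Order.TTheory GRing.Theory Num.Theory.
Local Open Scope ring_scope.

(* Conventions:
   - The lattice M of rank n is Z^n = 'cV[int]_n; its dual N is also
     'cV[int]_n with the standard pairing m . n = m^T n.
   - P : Z^r -> M and Q : Z^r -> N are integer n x r matrices (columns = images
     of the standard basis vectors).
   - N_Q = Q^n.  The lattice N^bullet (commensurable with N, i.e. a full-rank
     lattice in N_Q) is given by an invertible rational basis matrix Nb:
     N^bullet = Nb *m Z^n.  Q^bullet : Z^r -> N^bullet is given by its
     coordinate matrix Qb w.r.t. this basis, so in N-coordinates
     Q^bullet = Nb *m Qb.
   - D = diag(d) with d : 'rV[rat]_r, all entries > 0. *)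

Definition intQ {m n} (A : 'M[int]_(m, n)) : 'M[rat]_(m, n) :=
  map_mx (fun x : int => x%:~R) A.

Record seed_datum (r : nat) := SeedDatum {
  sd_rank : nat;
  sd_P : 'M[int]_(sd_rank, r);
  sd_Q : 'M[int]_(sd_rank, r);
  sd_Q_nz : forall i : 'I_r, col i sd_Q != 0;
  sd_Nb : 'M[rat]_sd_rank;
  sd_Nb_unit : sd_Nb \in unitmx;
  sd_d : 'rV[rat]_r;
  sd_d_pos : forall i : 'I_r, 0 < sd_d 0 i;
  sd_Qb : 'M[int]_(sd_rank, r);
  sd_Q_eq : intQ sd_Q = (sd_Nb *m intQ sd_Qb) *m diag_mx sd_d;
  sd_skew : let Bb := (sd_Nb *m intQ sd_Qb)^T *m intQ sd_P in
            Bb^T = - Bb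
}.

Definition integral_linear_morphism {r : nat} (S S' : seed_datum r)
    (A : 'M[int]_(sd_rank S', sd_rank S)) : Prop :=
  [/\ sd_d S = sd_d S', A *m sd_P S = sd_P S' & A^T *m sd_Q S' = sd_Q S].

Definition int_injective {m n} (A : 'M[int]_(m, n)) : Prop :=
  forall v : 'cV[int]_n, A *m v = 0 -> v = 0.

Definition int_surjective {m n} (A : 'M[int]_(m, n)) : Prop :=
  forall w : 'cV[int]_m, exists v : 'cV[int]_n, A *m v = w.

(* image is saturated: Z^m / im A is torsion-free *)
Definition int_saturated {m n} (A : 'M[int]_(m, n)) : Prop :=
  forall (w : 'cV[int]_m) (k : int), k != 0 ->
    (exists v : 'cV[int]_n, A *m v = k *: w) ->
    exists u : 'cV[int]_n, A *m u = w.

Definition saturated_injective (r : nat) (S : seed_datum r) : Prop :=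
  [/\ int_injective (sd_P S), int_saturated (sd_P S),
      int_injective (sd_Q S) & int_saturated (sd_Q S)].
Arguments integral_linear_morphism {r} S S' A.

From mathcomp Require Import all_boot all_order all_algebra.
Import Order.TTheory GRing.Theory Num.Theory.
Local Open Scope ring_scope.

(* Enlarge M to M' = M (+) Z^r by a summand on which P vanishes and Q is the
   identity: the inclusion M -> M' is then an injective morphism and Q' is a
   split injection.  Enlarge M' once more to M'' = M' (+) Z^r by a summand on
   which P is the identity and Q vanishes: the projection M'' -> M' is a
   surjective morphism, and both P'' and Q'' are split injections, hence
   saturated injections.  Along the way N^bullet is enlarged by D^-1 Z^r and
   Z^r respectively, which keeps Q = Q^bullet D and adds nothing to B^bullet. *)

Lemma intQ0 m n : intQ (0 : 'M[int]_(m, n)) = 0.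
Proof. by apply/matrixP=> i j; rewrite !mxE. Qed.

Lemma intQ1 n : intQ (1%:M : 'M[int]_n) = 1%:M.
Proof. by apply/matrixP=> i j; rewrite !mxE; case: (i == j). Qed.

Lemma intQ_col_mx m1 m2 n (A : 'M[int]_(m1, n)) (B : 'M[int]_(m2, n)) :
  intQ (col_mx A B) = col_mx (intQ A) (intQ B).
Proof. exact: map_col_mx. Qed.

Lemma int_injective_linv m n (C : 'M[int]_(m, n)) (L : 'M[int]_(n, m)) :
  L *m C = 1%:M -> int_injective C.
Proof. by move=> LC v Cv; rewrite -[v]mul1mx -LC -mulmxA Cv mulmx0. Qed.

Lemma int_saturated_linv m n (C : 'M[int]_(m, n)) (L : 'M[int]_(n, m)) :
  L *m C = 1%:M -> int_saturated C.
Proof.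
move=> LC w k k_neq0 [v Cv]; exists (L *m w).
have /matrixP eq_k : k *: (C *m (L *m w)) = k *: w.
  by rewrite !scalemxAr -Cv (mulmxA L) LC mul1mx.
by apply/matrixP=> i j; have := eq_k i j; rewrite !mxE; apply: mulfI.
Qed.

Lemma int_surjective_linv m n (C : 'M[int]_(m, n)) (L : 'M[int]_(n, m)) :
  L *m C = 1%:M -> int_surjective L.
Proof. by move=> LC w; exists (C *m w); rewrite mulmxA LC mul1mx. Qed.

Lemma unitmx_block_diag (R : comUnitRingType) n1 n2 (A : 'M[R]_n1) (B : 'M[R]_n2) :
  A \in unitmx -> B \in unitmx -> block_mx A 0 0 B \in unitmx.
Proof. by rewrite !unitmxE det_ublock unitrM => -> ->. Qed.

(* The summand (X, Y) need not be a seed datum on its own: Q e_i <> 0 is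
   inherited from S. *)
Section SeedSum.

Variables (r : nat) (S : seed_datum r) (k : nat).
Variables (X Y Yb : 'M[int]_(k, r)) (E : 'M[rat]_k).
Hypothesis E_unit : E \in unitmx.
Hypothesis Y_eq : intQ Y = (E *m intQ Yb) *m diag_mx (sd_d S).
Hypothesis skewX : ((E *m intQ Yb)^T *m intQ X)^T = - ((E *m intQ Yb)^T *m intQ X).

Let n := sd_rank S.

Definition sum_P : 'M[int]_(n + k, r) := col_mx (sd_P S) X.
Definition sum_Q : 'M[int]_(n + k, r) := col_mx (sd_Q S) Y.
Definition sum_Nb : 'M[rat]_(n + k) := block_mx (sd_Nb S) 0 0 E.
Definition sum_Qb : 'M[int]_(n + k, r) := col_mx (sd_Qb S) Yb.

Lemma sum_Q_nz i : col i sum_Q != 0.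
Proof.
apply: contra (sd_Q_nz S i) => /eqP.
by rewrite /sum_Q col_col_mx -col_mx0 => /eq_col_mx[-> _].
Qed.

Lemma sum_Nb_unit : sum_Nb \in unitmx.
Proof. exact: unitmx_block_diag (sd_Nb_unit S) E_unit. Qed.

Lemma sum_Nb_Qb :
  sum_Nb *m intQ sum_Qb = col_mx (sd_Nb S *m intQ (sd_Qb S)) (E *m intQ Yb).
Proof. by rewrite intQ_col_mx mul_block_col !mul0mx addr0 add0r. Qed.

Lemma sum_Q_eq : intQ sum_Q = (sum_Nb *m intQ sum_Qb) *m diag_mx (sd_d S).
Proof. by rewrite sum_Nb_Qb mul_col_mx -(sd_Q_eq S) -Y_eq intQ_col_mx. Qed.

Lemma sum_skew : let Bb := (sum_Nb *m intQ sum_Qb)^T *m intQ sum_P in Bb^T = - Bb.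
Proof.
have /= skewS := sd_skew S.
by rewrite /= sum_Nb_Qb intQ_col_mx tr_col_mx mul_row_col linearD /= skewS skewX opprD.
Qed.

Definition seed_sum : seed_datum r :=
  @SeedDatum r (n + k) sum_P sum_Q sum_Q_nz sum_Nb sum_Nb_unit (sd_d S)
    (sd_d_pos S) sum_Qb sum_Q_eq sum_skew.

Lemma seed_sum_inl : X = 0 ->
  integral_linear_morphism S seed_sum (col_mx 1%:M 0).
Proof.
move=> X0; split=> //=; rewrite /sum_P /sum_Q ?X0.
  by rewrite mul_col_mx mul1mx mul0mx.
by rewrite tr_col_mx trmx1 trmx0 mul_row_col mul1mx mul0mx addr0.
Qed.

Lemma seed_sum_proj : Y = 0 ->
  integral_linear_morphism seed_sum S (row_mx 1%:M 0).
Proof.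
move=> Y0; split=> //=; rewrite /sum_P /sum_Q ?Y0.
  by rewrite mul_row_col mul1mx mul0mx addr0.
by rewrite tr_row_mx trmx1 trmx0 mul_col_mx mul1mx mul0mx.
Qed.

End SeedSum.

Lemma diag_mx_unit (R : numFieldType) r (d : 'rV[R]_r) :
  (forall i, 0 < d 0 i) -> diag_mx d \in unitmx.
Proof.
move=> d_pos; rewrite unitmxE det_diag unitfE; apply/prodf_neq0 => i _.
by rewrite gt_eqF.
Qed.

Section Extensions.

Variables (r : nat) (S : seed_datum r).
Let D := diag_mx (sd_d S).

Lemma invmx_diag_unit : invmx D \in unitmx.
Proof. by rewrite unitmx_inv; exact: diag_mx_unit (sd_d_pos S). Qed.

Lemma extQ_Q_eq : intQ (1%:M : 'M[int]_r) = (invmx D *m intQ 1%:M) *m D.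
Proof. by rewrite intQ1 mulmx1 mulVmx //; exact: diag_mx_unit (sd_d_pos S). Qed.

Lemma extQ_skew :
  ((invmx D *m intQ 1%:M)^T *m intQ (0 : 'M[int]_r))^T
  = - ((invmx D *m intQ 1%:M)^T *m intQ 0).
Proof. by rewrite intQ0 mulmx0 trmx0 oppr0. Qed.

Definition seed_extQ : seed_datum r :=
  @seed_sum r S r 0 1%:M 1%:M (invmx D) invmx_diag_unit extQ_Q_eq extQ_skew.

Lemma extP_Q_eq : intQ (0 : 'M[int]_r) = (1%:M *m intQ 0) *m D.
Proof. by rewrite intQ0 mulmx0 mul0mx. Qed.

Lemma extP_skew :
  ((1%:M *m intQ (0 : 'M[int]_r))^T *m intQ 1%:M)^T
  = - ((1%:M *m intQ 0)^T *m intQ (1%:M : 'M[int]_r)).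
Proof. by rewrite intQ0 mulmx0 trmx0 mul0mx trmx0 oppr0. Qed.

Definition seed_extP : seed_datum r :=
  @seed_sum r S r 1%:M 0 0 1%:M (@unitmx1 _ r) extP_Q_eq extP_skew.

End Extensions.

Arguments seed_extQ {r} S.
Arguments seed_extP {r} S.

Lemma saturated_injective_seed_extPQ r (S : seed_datum r) :
  saturated_injective (seed_extP (seed_extQ S)).
Proof.
have linvP : row_mx 0 1%:M *m sd_P (seed_extP (seed_extQ S)) = 1%:M.
  by rewrite /= /sum_P mul_row_col mul0mx add0r mul1mx.
have linvQ : row_mx (row_mx 0 1%:M) 0 *m sd_Q (seed_extP (seed_extQ S)) = 1%:M.
  by rewrite /= /sum_Q !mul_row_col mul0mx mulmx0 add0r addr0 mul1mx.
split; [exact: int_injective_linv linvP | exact: int_saturated_linv linvP |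
        exact: int_injective_linv linvQ | exact: int_saturated_linv linvQ].
Qed.

Theorem mainTheorem16 (r : nat) (S : seed_datum r) :
  exists (S' S'' : seed_datum r)
         (A : 'M[int]_(sd_rank S', sd_rank S))
         (B : 'M[int]_(sd_rank S', sd_rank S'')),
    [/\ integral_linear_morphism S S' A,
        integral_linear_morphism S'' S' B,
        int_injective A,
        int_surjective B &
        saturated_injective S''].
Proof.
pose S' := seed_extQ S; pose S'' := seed_extP S'.
exists S', S'', (col_mx 1%:M 0), (row_mx 1%:M 0).
have proj_inl m k : row_mx 1%:M 0 *m col_mx 1%:M (0 : 'M_(k, m)) = 1%:M :> 'M[int]_m.
  by rewrite mul_row_col mul1mx mul0mx addr0.
split.
- exact: seed_sum_inl.
- exact: seed_sum_proj.
- exact: int_injective_linv (proj_inl _ r).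
- exact: int_surjective_linv (proj_inl _ r).
- exact: saturated_injective_seed_extPQ.
Qed.
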